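(* Let $\alpha\in(0,\pi)$, $a\in A_N$, $d\in\{\pm1\}^N$, $\gamma_n=d_n-\cos\alpha$, $\mu^*_{a,d}=\sum_{n=1}^N\gamma_n\mu_{a_n}$, and \[ \lambda_n=\gamma_n\log(2-2a_n^2)+\sum_{k\ne n}\gamma_k\mu_{a_k}(a_n),\qquad n=1,\dots,N. \] Then there exists a constant $C=C(a)>0$ such that \[ \Big|\mu^*_{a,d}(a_n\pm r)-\lambda_n-\gamma_n\log\frac1r\Big|\le Cr \] for all $r\in(0,\rho(a)]$ and all $n=1,\dots,N$.
   Context: $A_N=\{a\in(-1,1)^N:-1<a_1<\dots<a_N<1\}$; $\rho(a)=\frac12\min\{2a_1+2,a_2-a_1,\dots,a_N-a_{N-1},2-2a_N\}$. Let $\mu(x_1)=\log(1+\sqrt{1-x_1^2})-\log|x_1|$ for $x_1\in(-1,1)\setminus\{0\}$ and, for $b\in(-1,1)$, $\mu_b(x_1)=\mu\big(\frac{x_1-b}{1-bx_1}\big)$ for $x_1\in(-1,1)\setminus\{b\}$. *)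

(* concrete reals R. Sequences indexed 0..N-1 (paper: 1..N). *)
From Stdlib Require Import Reals Lra List.
Import ListNotations.
Open Scope R_scope.

Definition in_A (N : nat) (a : nat -> R) : Prop :=
  (forall n : nat, (n < N)%nat -> -1 < a n < 1) /\
  (forall n : nat, (S n < N)%nat -> a n < a (S n)).

Definition rho (N : nat) (a : nat -> R) : R :=
  / 2 * fold_right Rmin (2 * a 0%nat + 2)
          ((2 - 2 * a (N - 1)%nat)
             :: map (fun k => a (k + 1)%nat - a k) (seq 0 (N - 1))).

Definition mu (x : R) : R := ln (1 + sqrt (1 - x ^ 2)) - ln (Rabs x).

Definition mu_b (b x : R) : R := mu ((x - b) / (1 - b * x)).

Definition gamma (alpha : R) (d : nat -> R) (n : nat) : R := d n - cos alpha.

Definition mu_star (N : nat) (alpha : R) (a d : nat -> R) (x : R) : R :=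
  fold_right Rplus 0 (map (fun k => gamma alpha d k * mu_b (a k) x) (seq 0 N)).

Definition lambda (N : nat) (alpha : R) (a d : nat -> R) (n : nat) : R :=
  gamma alpha d n * ln (2 - 2 * (a n) ^ 2) +
  fold_right Rplus 0
    (map (fun k => gamma alpha d k * mu_b (a k) (a n))
         (filter (fun k => negb (Nat.eqb k n)) (seq 0 N))).

(* Write x = a_n +- r.  The singular summand is gamma_n mu_{a_n}(x): with
   t = (x - a_n)/(1 - a_n x) one has |t| = r/(1 - a_n x), hence
     mu_{a_n}(x) - log(2 - 2a_n^2) - log(1/r)
       = [log(1 + sqrt(1 - t^2)) - log 2] + [log(1 - a_n x) - log(1 - a_n^2)],
   and both brackets are O(r) because log is Lipschitz away from 0.  Every other
   summand gamma_k mu_{a_k} is Lipschitz on the points at distance at least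
   |a_n - a_k|/2 from a_k, a set which contains [a_n - rho(a), a_n + rho(a)] by the
   choice of rho(a).  Since |gamma_k| <= 2, the constant depends only on a. *)

From Stdlib Require Import Reals Lra Psatz List Lia.
Open Scope R_scope.

Lemma Rabs_sub_le_add p q : Rabs (p - q) <= Rabs p + Rabs q.
Proof. unfold Rminus. rewrite <- (Rabs_Ropp q). apply Rabs_triang. Qed.

Lemma Rle_inv_mult_l m p q : 0 < m -> m * p <= q -> p <= / m * q.
Proof.
  intros Hm H. apply Rmult_le_reg_l with m; [exact Hm|].
  rewrite <- Rmult_assoc, Rinv_r, Rmult_1_l by lra. exact H.
Qed.

Lemma ln_le_sub1 u : 0 < u -> ln u <= u - 1.
Proof. intro Hu. pose proof (exp_ineq1_le (ln u)) as H. rewrite exp_ln in H by lra. lra. Qed.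

Lemma ln_sub_le_div u v : 0 < u -> 0 < v -> ln u - ln v <= (u - v) / v.
Proof.
  intros Hu Hv.
  assert (Hq : 0 < u / v) by (apply Rdiv_lt_0_compat; lra).
  replace (ln u - ln v) with (ln (u / v)).
  - replace ((u - v) / v) with (u / v - 1) by (field; lra). now apply ln_le_sub1.
  - unfold Rdiv. rewrite ln_mult, ln_Rinv; try lra. now apply Rinv_0_lt_compat.
Qed.

Lemma ln_lipschitz m u v :
  0 < m -> m <= u -> m <= v -> m * Rabs (ln u - ln v) <= Rabs (u - v).
Proof.
  intros Hm Hu Hv.
  pose proof (ln_sub_le_div u v ltac:(lra) ltac:(lra)) as Huv.
  pose proof (ln_sub_le_div v u ltac:(lra) ltac:(lra)) as Hvu.
  assert (Ev : v * ((u - v) / v) = u - v) by (field; lra).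
  assert (Eu : u * ((v - u) / u) = v - u) by (field; lra).
  unfold Rabs; destruct (Rcase_abs (ln u - ln v)); destruct (Rcase_abs (u - v)); nra.
Qed.

Lemma sqrt_lipschitz u v :
  0 <= u -> 0 < v -> sqrt v * Rabs (sqrt u - sqrt v) <= Rabs (u - v).
Proof.
  intros Hu Hv.
  pose proof (sqrt_sqrt u Hu). pose proof (sqrt_sqrt v ltac:(lra)).
  pose proof (sqrt_pos u). pose proof (sqrt_lt_R0 v Hv).
  replace (u - v) with ((sqrt u - sqrt v) * (sqrt u + sqrt v)) by nra.
  rewrite Rabs_mult, (Rabs_right (sqrt u + sqrt v)) by lra.
  pose proof (Rabs_pos (sqrt u - sqrt v)). nra.
Qed.

Definition mu_regular (t : R) : R := ln (1 + sqrt (1 - t ^ 2)).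

Lemma sqrt_1_sub_sqr_bounds t : 0 <= sqrt (1 - t ^ 2) <= 1 /\ 1 - sqrt (1 - t ^ 2) <= t ^ 2.
Proof.
  destruct (Rle_dec 0 (1 - t ^ 2)) as [H|H].
  - pose proof (sqrt_sqrt _ H). pose proof (sqrt_pos (1 - t ^ 2)). split; [split|]; nra.
  - rewrite sqrt_neg_0 by lra. split; [lra|nra].
Qed.

Lemma mu_regular_sub_ln2 t : Rabs (mu_regular t - ln 2) <= t ^ 2.
Proof.
  destruct (sqrt_1_sub_sqr_bounds t) as [[H0 H1] H2].
  pose proof (ln_lipschitz 1 (1 + sqrt (1 - t ^ 2)) 2 ltac:(lra) ltac:(lra) ltac:(lra)) as H.
  rewrite (Rabs_left1 (1 + sqrt (1 - t ^ 2) - 2)) in H; unfold mu_regular; lra.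
Qed.

Lemma mu_regular_lipschitz t u : -1 <= t <= 1 -> -1 < u < 1 ->
  sqrt (1 - u ^ 2) * Rabs (mu_regular t - mu_regular u) <= 2 * Rabs (t - u).
Proof.
  intros Ht Hu.
  destruct (sqrt_1_sub_sqr_bounds t) as [[Ht0 Ht1] _].
  destruct (sqrt_1_sub_sqr_bounds u) as [[Hu0 Hu1] _].
  pose proof (ln_lipschitz 1 (1 + sqrt (1 - t ^ 2)) (1 + sqrt (1 - u ^ 2))
                ltac:(lra) ltac:(lra) ltac:(lra)) as Hln.
  replace (1 + sqrt (1 - t ^ 2) - (1 + sqrt (1 - u ^ 2)))
    with (sqrt (1 - t ^ 2) - sqrt (1 - u ^ 2)) in Hln by ring.
  pose proof (sqrt_lipschitz (1 - t ^ 2) (1 - u ^ 2) ltac:(nra) ltac:(nra)) as Hsq.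
  replace (1 - t ^ 2 - (1 - u ^ 2)) with ((t - u) * (- (t + u))) in Hsq by ring.
  rewrite Rabs_mult, Rabs_Ropp in Hsq.
  assert (Rabs (t + u) <= 2) by (apply Rabs_le; lra).
  pose proof (Rabs_pos (t - u)). pose proof (Rabs_pos (mu_regular t - mu_regular u)).
  unfold mu_regular. nra.
Qed.

Definition mobius (b x : R) : R := (x - b) / (1 - b * x).

Lemma mu_b_mobius b x : mu_b b x = mu_regular (mobius b x) - ln (Rabs (mobius b x)).
Proof. reflexivity. Qed.

Lemma one_sub_abs_pos b : -1 < b < 1 -> 0 < 1 - Rabs b.
Proof. intros. unfold Rabs; destruct (Rcase_abs b); lra. Qed.

Lemma one_sub_abs_le_one_sub_sqr b : -1 < b < 1 -> 1 - Rabs b <= 1 - b ^ 2.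
Proof. intros. unfold Rabs; destruct (Rcase_abs b); nra. Qed.

Lemma mobius_denom_ge b x : -1 <= x <= 1 -> 1 - Rabs b <= 1 - b * x.
Proof. intros. unfold Rabs; destruct (Rcase_abs b); nra. Qed.

Section Mobius.

Variable b : R.
Hypothesis Hb : -1 < b < 1.

Lemma mobius_mul_denom x : -1 <= x <= 1 -> mobius b x * (1 - b * x) = x - b.
Proof.
  intros Hx. pose proof (mobius_denom_ge b x Hx). pose proof (one_sub_abs_pos b Hb).
  unfold mobius. field. lra.
Qed.

Lemma mobius_abs x : -1 <= x <= 1 -> Rabs (mobius b x) * (1 - b * x) = Rabs (x - b).
Proof.
  intros Hx. pose proof (mobius_denom_ge b x Hx). pose proof (one_sub_abs_pos b Hb).
  rewrite <- (mobius_mul_denom x Hx), Rabs_mult, (Rabs_right (1 - b * x)); lra.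
Qed.

Lemma mobius_le1 x : -1 <= x <= 1 -> -1 <= mobius b x <= 1.
Proof.
  intros Hx. pose proof (mobius_abs x Hx). pose proof (mobius_denom_ge b x Hx).
  pose proof (one_sub_abs_pos b Hb).
  assert (Rabs (x - b) <= 1 - b * x) by (apply Rabs_le; nra).
  assert (Rabs (mobius b x) <= 1) by nra.
  unfold Rabs in *; destruct (Rcase_abs (mobius b x)); lra.
Qed.

Lemma mobius_lt1 x : -1 < x < 1 -> -1 < mobius b x < 1.
Proof.
  intros Hx. pose proof (mobius_abs x ltac:(lra)). pose proof (mobius_denom_ge b x ltac:(lra)).
  pose proof (one_sub_abs_pos b Hb).
  assert (Rabs (x - b) < 1 - b * x) by (apply Rabs_def1; nra).
  assert (Hlt : Rabs (mobius b x) < 1) by nra.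
  apply Rabs_def2 in Hlt. lra.
Qed.

Lemma mobius_abs_ge x : -1 <= x <= 1 -> Rabs (x - b) / 2 <= Rabs (mobius b x).
Proof.
  intros Hx. pose proof (mobius_abs x Hx). pose proof (mobius_denom_ge b x Hx).
  pose proof (Rabs_pos (mobius b x)).
  assert (1 - b * x <= 2) by nra. nra.
Qed.

Lemma mobius_lipschitz x y : -1 <= x <= 1 -> -1 <= y <= 1 ->
  Rabs (mobius b x - mobius b y) <= / (1 - Rabs b) ^ 2 * Rabs (x - y).
Proof.
  intros Hx Hy. pose proof (mobius_denom_ge b x Hx). pose proof (mobius_denom_ge b y Hy).
  pose proof (one_sub_abs_pos b Hb).
  pose proof (one_sub_abs_le_one_sub_sqr b Hb).
  apply Rle_inv_mult_l; [nra|].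
  assert (E : Rabs (mobius b x - mobius b y) * ((1 - b * x) * (1 - b * y))
              = Rabs (x - y) * (1 - b ^ 2)).
  { rewrite <- (Rabs_right ((1 - b * x) * (1 - b * y))) by nra.
    rewrite <- (Rabs_right (1 - b ^ 2)) by nra. rewrite <- !Rabs_mult.
    f_equal. unfold mobius. field. lra. }
  pose proof (Rabs_pos (mobius b x - mobius b y)). pose proof (Rabs_pos (x - y)).
  assert ((1 - Rabs b) ^ 2 <= (1 - b * x) * (1 - b * y)) by nra.
  nra.
Qed.

End Mobius.

Lemma mu_b_log_singularity b : -1 < b < 1 ->
  exists K, 0 < K /\ forall x, -1 <= x <= 1 -> 0 < Rabs (x - b) ->
    Rabs (mu_b b x - ln (2 - 2 * b ^ 2) - ln (1 / Rabs (x - b))) <= K * Rabs (x - b).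
Proof.
  intros Hb. pose proof (one_sub_abs_pos b Hb) as Hc. set (c := 1 - Rabs b) in *.
  exists (2 / c ^ 2 + / c). split.
  { assert (0 < / c) by (apply Rinv_0_lt_compat; lra).
    assert (0 < 2 / c ^ 2) by (apply Rdiv_lt_0_compat; nra). lra. }
  intros x Hx Hr. set (r := Rabs (x - b)) in *.
  pose proof (mobius_denom_ge b x Hx) as HD. fold c in HD.
  pose proof (mobius_abs b Hb x Hx) as HT. fold r in HT.
  pose proof (one_sub_abs_le_one_sub_sqr b Hb) as Hb2. fold c in Hb2.
  rewrite mu_b_mobius. set (t := mobius b x) in *. set (D := 1 - b * x) in *.
  assert (Hlnt : ln (Rabs t) = ln r - ln D).
  { replace (Rabs t) with (r / D) by (rewrite <- HT; field; lra).
    unfold Rdiv. rewrite ln_mult, ln_Rinv; try lra. apply Rinv_0_lt_compat; lra. }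
  assert (Hlnr : ln (1 / r) = - ln r) by (unfold Rdiv; rewrite Rmult_1_l, ln_Rinv; lra).
  assert (Hln2 : ln (2 - 2 * b ^ 2) = ln 2 + ln (1 - b ^ 2))
    by (rewrite <- ln_mult by lra; f_equal; ring).
  rewrite Hlnt, Hlnr, Hln2.
  replace (mu_regular t - (ln r - ln D) - (ln 2 + ln (1 - b ^ 2)) - - ln r)
    with ((mu_regular t - ln 2) - (ln (1 - b ^ 2) - ln D)) by ring.
  eapply Rle_trans; [apply Rabs_sub_le_add|]. rewrite Rmult_plus_distr_r.
  apply Rplus_le_compat.
  - eapply Rle_trans; [apply mu_regular_sub_ln2|].
    assert (Hr2 : r <= 2) by (unfold r; apply Rabs_le; lra).
    assert (Ht2 : t ^ 2 * D ^ 2 = r ^ 2) by (rewrite <- (pow2_abs t), <- HT; ring).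
    assert (c ^ 2 * t ^ 2 <= D ^ 2 * t ^ 2) by (apply Rmult_le_compat_r; nra).
    unfold Rdiv. rewrite Rmult_comm, <- Rmult_assoc, Rmult_comm.
    apply Rle_inv_mult_l; nra.
  - pose proof (ln_lipschitz c (1 - b ^ 2) D Hc Hb2 HD) as Hln.
    replace (1 - b ^ 2 - D) with (b * (x - b)) in Hln by (unfold D; ring).
    rewrite Rabs_mult in Hln. fold r in Hln.
    apply Rle_inv_mult_l; [exact Hc|].
    assert (Rabs b <= 1) by (unfold c in Hc; lra).
    pose proof (Rabs_pos b). assert (0 <= r) by apply Rabs_pos. nra.
Qed.

Lemma mu_b_lipschitz_away b y : -1 < b < 1 -> -1 < y < 1 -> y <> b ->
  exists K, 0 < K /\ forall x, -1 <= x <= 1 -> Rabs (y - b) / 2 <= Rabs (x - b) ->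
    Rabs (mu_b b x - mu_b b y) <= K * Rabs (x - y).
Proof.
  intros Hb Hy Hyb. pose proof (one_sub_abs_pos b Hb) as Hc. set (c := 1 - Rabs b) in *.
  assert (Hm : 0 < Rabs (y - b) / 4) by (pose proof (Rabs_pos_lt (y - b) ltac:(lra)); lra).
  set (m := Rabs (y - b) / 4) in *.
  pose proof (mobius_lt1 b Hb y Hy) as Hu.
  set (u := mobius b y) in *.
  assert (Hq : 0 < sqrt (1 - u ^ 2)) by (apply sqrt_lt_R0; nra).
  set (q := sqrt (1 - u ^ 2)) in *.
  exists ((2 / q + / m) / c ^ 2). split.
  { assert (0 < / m) by (apply Rinv_0_lt_compat; lra).
    assert (0 < 2 / q) by (apply Rdiv_lt_0_compat; lra).
    apply Rdiv_lt_0_compat; nra. }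
  intros x Hx Hxb.
  pose proof (mobius_le1 b Hb x Hx) as Ht.
  pose proof (mobius_lipschitz b Hb x y Hx ltac:(lra)) as Htu. fold c u in Htu.
  assert (Hmt : m <= Rabs (mobius b x)) by (pose proof (mobius_abs_ge b Hb x Hx); unfold m; lra).
  assert (Hmu : m <= Rabs u).
  { pose proof (mobius_abs_ge b Hb y ltac:(lra)) as Hge. fold u in Hge.
    pose proof (Rabs_pos (y - b)). unfold m. lra. }
  rewrite !mu_b_mobius. fold u. set (t := mobius b x) in *.
  replace (mu_regular t - ln (Rabs t) - (mu_regular u - ln (Rabs u)))
    with ((mu_regular t - mu_regular u) - (ln (Rabs t) - ln (Rabs u))) by ring.
  eapply Rle_trans; [apply Rabs_sub_le_add|].
  unfold Rdiv. rewrite !Rmult_plus_distr_r.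
  apply Rplus_le_compat.
  - apply Rle_trans with (/ q * (2 * Rabs (t - u))).
    + apply Rle_inv_mult_l; [exact Hq|]. exact (mu_regular_lipschitz t u Ht Hu).
    + replace (2 * / q * / c ^ 2 * Rabs (x - y)) with (/ q * (2 * (/ c ^ 2 * Rabs (x - y))))
        by ring.
      apply Rmult_le_compat_l; [left; now apply Rinv_0_lt_compat|]. lra.
  - apply Rle_trans with (/ m * Rabs (t - u)).
    + apply Rle_inv_mult_l; [exact Hm|].
      eapply Rle_trans; [apply (ln_lipschitz m); assumption|]. apply Rabs_triang_inv2.
    + rewrite Rmult_assoc.
      apply Rmult_le_compat_l; [left; now apply Rinv_0_lt_compat|]. exact Htu.
Qed.

Lemma filter_neqb_notin n l : ~ In n l -> filter (fun k => negb (k =? n)%nat) l = l.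
Proof.
  induction l as [|k l IH]; simpl; intros Hn; [reflexivity|].
  destruct (Nat.eqb_spec k n); [tauto|]. simpl. f_equal. apply IH. tauto.
Qed.

Lemma sum_map_split (f : nat -> R) n l : NoDup l -> In n l ->
  fold_right Rplus 0 (map f l)
  = f n + fold_right Rplus 0 (map f (filter (fun k => negb (k =? n)%nat) l)).
Proof.
  induction l as [|k l IH]; simpl; intros Hnd Hin; [contradiction|].
  inversion Hnd as [|? ? Hk Hl]; subst.
  destruct (Nat.eqb_spec k n) as [->|Hkn].
  - simpl. now rewrite filter_neqb_notin.
  - simpl. destruct Hin as [Hin|Hin]; [congruence|]. rewrite IH by assumption. ring.
Qed.

Lemma sum_map_sub (f g : nat -> R) l :
  fold_right Rplus 0 (map f l) - fold_right Rplus 0 (map g l)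
  = fold_right Rplus 0 (map (fun k => f k - g k) l).
Proof. induction l as [|k l IH]; simpl; [ring|]. rewrite <- IH. ring. Qed.

Lemma Rabs_sum_map_le (h : nat -> R) B l : 0 <= B -> (forall k, In k l -> Rabs (h k) <= B) ->
  Rabs (fold_right Rplus 0 (map h l)) <= INR (length l) * B.
Proof.
  intros HB. induction l as [|k l IH]; intros H; cbn [length map fold_right].
  - rewrite Rabs_R0. simpl. lra.
  - rewrite S_INR. eapply Rle_trans; [apply Rabs_triang|].
    assert (Rabs (h k) <= B) by (apply H; now left).
    assert (Rabs (fold_right Rplus 0 (map h l)) <= INR (length l) * B)
      by (apply IH; intros; apply H; now right).
    lra.
Qed.

Lemma exists_uniform_bound (P : nat -> R -> Prop) N :
  (forall k C C', P k C -> C <= C' -> P k C') ->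
  (forall k, (k < N)%nat -> exists C, 0 < C /\ P k C) ->
  exists C, 0 < C /\ forall k, (k < N)%nat -> P k C.
Proof.
  intros Hmon. induction N as [|N IH]; intros H.
  - exists 1. split; [lra|]. intros; lia.
  - destruct IH as [C1 [HC1 H1]]; [intros; apply H; lia|].
    destruct (H N ltac:(lia)) as [C2 [HC2 H2]].
    exists (Rmax C1 C2). split; [eapply Rlt_le_trans; [exact HC1|apply Rmax_l]|].
    intros k Hk. destruct (Nat.eq_dec k N) as [->|HkN].
    + eapply Hmon; [exact H2|apply Rmax_r].
    + eapply Hmon; [apply H1; lia|apply Rmax_l].
Qed.

Lemma fold_right_Rmin_le_init x0 l : fold_right Rmin x0 l <= x0.
Proof. induction l; simpl; [lra|]. eapply Rle_trans; [apply Rmin_r|assumption]. Qed.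

Lemma fold_right_Rmin_le_in x0 l y : In y l -> fold_right Rmin x0 l <= y.
Proof.
  induction l as [|z l IH]; simpl; intros H; [contradiction|].
  destruct H as [->|H]; [apply Rmin_l|].
  eapply Rle_trans; [apply Rmin_r|]. now apply IH.
Qed.

Lemma Rabs_gamma_le alpha d k : d k = 1 \/ d k = -1 -> Rabs (gamma alpha d k) <= 2.
Proof.
  intros Hd. unfold gamma. pose proof (COS_bound alpha).
  apply Rabs_le. destruct Hd as [-> | ->]; lra.
Qed.

Lemma mu_star_sub_lambda N alpha a d n x L : (n < N)%nat ->
  mu_star N alpha a d x - lambda N alpha a d n - gamma alpha d n * L
  = gamma alpha d n * (mu_b (a n) x - ln (2 - 2 * a n ^ 2) - L)
    + fold_right Rplus 0
        (map (fun k => gamma alpha d k * (mu_b (a k) x - mu_b (a k) (a n)))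
             (filter (fun k => negb (k =? n)%nat) (seq 0 N))).
Proof.
  intros Hn. unfold mu_star, lambda.
  rewrite (sum_map_split _ n) by (apply seq_NoDup || (apply in_seq; lia)).
  set (F := filter _ (seq 0 N)).
  rewrite (map_ext (fun k => gamma alpha d k * (mu_b (a k) x - mu_b (a k) (a n)))
                   (fun k => gamma alpha d k * mu_b (a k) x - gamma alpha d k * mu_b (a k) (a n)))
    by (intros; ring).
  rewrite <- sum_map_sub. ring.
Qed.

Section Nodes.

Variables (N : nat) (a : nat -> R).

Lemma rho_le_left : rho N a <= a 0%nat + 1.
Proof. unfold rho. pose proof (fold_right_Rmin_le_init (2 * a 0%nat + 2)
  ((2 - 2 * a (N - 1)%nat) :: map (fun k => a (k + 1)%nat - a k) (seq 0 (N - 1)))). lra. Qed.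

Lemma rho_le_right : rho N a <= 1 - a (N - 1)%nat.
Proof. unfold rho. pose proof (fold_right_Rmin_le_in (2 * a 0%nat + 2)
  ((2 - 2 * a (N - 1)%nat) :: map (fun k => a (k + 1)%nat - a k) (seq 0 (N - 1)))
  _ (or_introl eq_refl)). lra. Qed.

Lemma rho_le_gap m : (S m < N)%nat -> 2 * rho N a <= a (S m) - a m.
Proof.
  intros Hm. unfold rho.
  pose proof (fold_right_Rmin_le_in (2 * a 0%nat + 2)
    ((2 - 2 * a (N - 1)%nat) :: map (fun k => a (k + 1)%nat - a k) (seq 0 (N - 1)))
    (a (S m) - a m)) as H.
  replace (S m) with (m + 1)%nat in * by lia.
  enough (H' : In (a (m + 1)%nat - a m) (map (fun k => a (k + 1)%nat - a k) (seq 0 (N - 1))))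
    by (specialize (H (or_intror H')); lra).
  apply (in_map (fun k => a (k + 1)%nat - a k)). apply in_seq. lia.
Qed.

Hypothesis Ha : in_A N a.

Lemma in_A_lt i j : (i < j)%nat -> (j < N)%nat -> a i < a j.
Proof.
  intros Hij. induction Hij as [|j Hij IH]; intros Hj.
  - apply (proj2 Ha). exact Hj.
  - apply Rlt_trans with (a j); [apply IH; lia|]. apply (proj2 Ha). exact Hj.
Qed.

Lemma in_A_le i j : (i <= j)%nat -> (j < N)%nat -> a i <= a j.
Proof.
  intros Hij Hj. destruct (Nat.eq_dec i j) as [->|Hne]; [lra|].
  left. apply in_A_lt; lia.
Qed.

Lemma rho_le_half_dist n k : (n < N)%nat -> (k < N)%nat -> k <> n ->
  2 * rho N a <= Rabs (a n - a k).
Proof.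
  intros Hn Hk Hkn. destruct (Nat.lt_total k n) as [Hlt|[Heq|Hgt]]; [| lia |].
  - destruct n as [|m]; [lia|].
    pose proof (rho_le_gap m Hn). pose proof (in_A_le k m ltac:(lia) ltac:(lia)).
    pose proof (in_A_lt m (S m) ltac:(lia) Hn).
    rewrite Rabs_right by lra. lra.
  - pose proof (rho_le_gap n ltac:(lia)). pose proof (in_A_le (S n) k ltac:(lia) Hk).
    pose proof (in_A_lt n (S n) ltac:(lia) ltac:(lia)).
    rewrite Rabs_left by lra. lra.
Qed.

Lemma in_A_inj i j : (i < N)%nat -> (j < N)%nat -> a i = a j -> i = j.
Proof.
  intros Hi Hj Hij. destruct (Nat.lt_total i j) as [Hlt|[Heq|Hgt]]; [| exact Heq |].
  - pose proof (in_A_lt i j Hlt Hj). lra.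
  - pose proof (in_A_lt j i Hgt Hi). lra.
Qed.

Lemma near_node_in_interval n x : (n < N)%nat -> Rabs (x - a n) <= rho N a -> -1 <= x <= 1.
Proof.
  intros Hn Hx. pose proof rho_le_left. pose proof rho_le_right.
  pose proof (in_A_le 0 n ltac:(lia) Hn). pose proof (in_A_le n (N - 1) ltac:(lia) ltac:(lia)).
  unfold Rabs in Hx; destruct (Rcase_abs (x - a n)); lra.
Qed.

Lemma near_node_far_from_others n k x : (n < N)%nat -> (k < N)%nat -> k <> n ->
  Rabs (x - a n) <= rho N a -> Rabs (a n - a k) / 2 <= Rabs (x - a k).
Proof.
  intros Hn Hk Hkn Hx. pose proof (rho_le_half_dist n k Hn Hk Hkn).
  pose proof (Rabs_triang_inv (a n - a k) (a n - x)) as Htri.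
  replace (a n - a k - (a n - x)) with (x - a k) in Htri by ring.
  rewrite Rabs_minus_sym in Hx. lra.
Qed.

Definition node_estimate (n : nat) (C : R) : Prop :=
  forall alpha d, (forall k, (k < N)%nat -> d k = 1 \/ d k = -1) ->
  forall x, 0 < Rabs (x - a n) <= rho N a ->
  Rabs (mu_star N alpha a d x - lambda N alpha a d n
        - gamma alpha d n * ln (1 / Rabs (x - a n))) <= C * Rabs (x - a n).

Lemma node_estimate_mono n C C' : node_estimate n C -> C <= C' -> node_estimate n C'.
Proof.
  intros H HC alpha d Hd x Hx. eapply Rle_trans; [now apply H|].
  apply Rmult_le_compat_r; [apply Rabs_pos|exact HC].
Qed.

Lemma exists_node_estimate n : (n < N)%nat -> exists C, 0 < C /\ node_estimate n C.
Proof.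
  intros Hn. pose proof (proj1 Ha n Hn) as Han.
  destruct (mu_b_log_singularity (a n) Han) as [K0 [HK0 Hsing]].
  destruct (exists_uniform_bound (fun k K => k <> n -> forall x, -1 <= x <= 1 ->
      Rabs (a n - a k) / 2 <= Rabs (x - a k) ->
      Rabs (mu_b (a k) x - mu_b (a k) (a n)) <= K * Rabs (x - a n)) N)
    as [M [HM Hlip]].
  { intros k K K' HK HKK' Hkn x Hx Hxk. eapply Rle_trans; [now apply HK|].
    apply Rmult_le_compat_r; [apply Rabs_pos|exact HKK']. }
  { intros k Hk. destruct (Nat.eq_dec k n) as [->|Hkn].
    - exists 1. split; [lra|]. intros; contradiction.
    - assert (Hne : a n <> a k) by (intro E; apply Hkn; symmetry; now apply in_A_inj).
      destruct (mu_b_lipschitz_away (a k) (a n) (proj1 Ha k Hk) Han Hne) as [K [HK HKx]].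
      exists K. split; [exact HK|]. intros _. exact HKx. }
  exists (2 * K0 + INR N * (2 * M)). split; [pose proof (pos_INR N); nra|].
  intros alpha d Hd x [Hr Hrho]. set (r := Rabs (x - a n)) in *.
  pose proof (near_node_in_interval n x Hn Hrho) as Hx.
  rewrite (mu_star_sub_lambda N alpha a d n x _ Hn).
  set (F := filter _ (seq 0 N)).
  eapply Rle_trans; [apply Rabs_triang|]. rewrite Rmult_plus_distr_r.
  apply Rplus_le_compat.
  - rewrite Rabs_mult, Rmult_assoc. pose proof (Rabs_gamma_le alpha d n (Hd n Hn)).
    pose proof (Hsing x Hx Hr) as Hs. fold r in Hs. apply Rmult_le_compat; auto using Rabs_pos.
  - assert (Hlen : INR (length F) <= INR N)
      by (apply le_INR; unfold F; rewrite <- (length_seq N 0) at 2; apply filter_length_le).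
    eapply Rle_trans; [apply (Rabs_sum_map_le _ (2 * M * r))|].
    + pose proof (Rabs_pos (x - a n)). nra.
    + intros k Hk. unfold F in Hk. apply filter_In in Hk as [Hk Hkn]. apply in_seq in Hk.
      assert (Hkn' : k <> n) by (intros ->; rewrite Nat.eqb_refl in Hkn; discriminate).
      rewrite Rabs_mult.
      pose proof (Rabs_gamma_le alpha d k (Hd k ltac:(lia))).
      pose proof (Hlip k ltac:(lia) Hkn' x Hx
                    (near_node_far_from_others n k x Hn ltac:(lia) Hkn' Hrho)).
      rewrite Rmult_assoc. apply Rmult_le_compat; auto using Rabs_pos.
    + rewrite (Rmult_assoc (INR N)). apply Rmult_le_compat_r; [nra|exact Hlen].
Qed.

End Nodes.

Theorem proposition2p8 (N : nat) (a : nat -> R) (Ha : in_A N a) :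
  exists C : R, 0 < C /\
    forall (alpha : R) (d : nat -> R),
      0 < alpha < PI ->
      (forall n : nat, (n < N)%nat -> d n = 1 \/ d n = -1) ->
      forall (r : R) (n : nat), 0 < r <= rho N a -> (n < N)%nat ->
        Rabs (mu_star N alpha a d (a n + r) - lambda N alpha a d n
              - gamma alpha d n * ln (1 / r)) <= C * r /\
        Rabs (mu_star N alpha a d (a n - r) - lambda N alpha a d n
              - gamma alpha d n * ln (1 / r)) <= C * r.
Proof.
  destruct (exists_uniform_bound (node_estimate N a) N) as [C [HC Hnode]].
  - apply node_estimate_mono.
  - exact (exists_node_estimate N a Ha).
  - exists C. split; [exact HC|]. intros alpha d _ Hd r n Hr Hn.
    assert (Hplus : Rabs (a n + r - a n) = r)
      by (replace (a n + r - a n) with r by ring; apply Rabs_right; lra).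
    assert (Hminus : Rabs (a n - r - a n) = r)
      by (replace (a n - r - a n) with (- r) by ring; rewrite Rabs_Ropp; apply Rabs_right; lra).
    pose proof (Hnode n Hn alpha d Hd (a n + r)) as Hright. rewrite Hplus in Hright.
    pose proof (Hnode n Hn alpha d Hd (a n - r)) as Hleft. rewrite Hminus in Hleft.
    split; [apply Hright | apply Hleft]; lra.
Qed.
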